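(* The multi-resolution LCMM is arbitrage-free: for every $\boldsymbol\theta\in\mathbb R^{\mathcal Z^*}$ and every $\boldsymbol\eta^\star\in\mathbb R^{\mathcal Y^*}$ minimizing $\boldsymbol\eta\mapsto\tilde C(\boldsymbol\theta+\mathbf A\boldsymbol\eta)$, the price vector $\boldsymbol p(\boldsymbol\theta)=\nabla\tilde C(\boldsymbol\theta+\mathbf A\boldsymbol\eta^\star)$ satisfies $\mathbf A^\top\boldsymbol p(\boldsymbol\theta)=\mathbf 0$ and lies in the coherent price space $\mathcal M=\mathrm{conv}\{\boldsymbol\phi(\omega):\omega\in\Omega\}$.
   Context: Fix an integer $K\ge1$, $N=2^K$, $\Omega=\{j/N:j=0,\dots,N-1\}$. Let $T^*$ be the complete binary tree of depth $K$ whose nodes are intervals: the root (level $0$) has $I_{\mathit{root}}=[0,1)$, and each node $z$ at level $k<K$ with $I_z=[\alpha_z,\beta_z)$ has children $\mathrm{left}(z)$, $\mathrm{right}(z)$ at level $k+1$ with intervals $[\alpha_z,\frac{\alpha_z+\beta_z}2)$ and $[\frac{\alpha_z+\beta_z}2,\beta_z)$. Let $\mathcal Z^*$ be its node set, $\mathcal Z_k$ the nodes at level $k$, $\mathrm{level}(z)$ the level of $z$, and $\mathcal Y^*=\mathcal Z^*\setminus\mathcal Z_K$ the inner nodes. Each node $z$ indexes an interval security with payoff $\phi_z(\omega)=1\{\omega\in I_z\}$; $\boldsymbol\phi(\omega)=(\phi_z(\omega))_{z\in\mathcal Z^*}$. Fix liquidity parameters $b_k>0$ for $k=0,\dots,K$,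 and set $B_\ell=\sum_{k=\ell+1}^K b_k$ for $\ell=-1,0,\dots,K$. For $\boldsymbol\theta\in\mathbb R^{\mathcal Z^*}$ write $\boldsymbol\theta_k$ for its restriction to $\mathcal Z_k$, let $C_k(\boldsymbol\theta_k)=b_k\log\sum_{z\in\mathcal Z_k}e^{\theta_z/b_k}$, and let $\tilde C(\boldsymbol\theta)=\sum_{k=0}^K C_k(\boldsymbol\theta_k)$ (direct-sum cost). The constraint matrix $\mathbf A\in\mathbb R^{\mathcal Z^*\times\mathcal Y^*}$ has entries $A_{zy}=B_{\mathrm{level}(z)}$ if $z=y$, $A_{zy}=-b_{\mathrm{level}(z)}$ if $I_z\subsetneq I_y$, and $0$ otherwise. The multi-resolution LCMM has cost function $C(\boldsymbol\theta)=\inf_{\boldsymbol\eta\in\mathbb R^{\mathcal Y^*}}\tilde C(\boldsymbol\theta+\mathbf A\boldsymbol\eta)$. *)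

From HB Require Import structures.
From mathcomp Require Import all_boot all_order all_algebra.
From mathcomp Require Import all_classical all_reals all_analysis.
Set Implicit Arguments. Unset Strict Implicit. Unset Printing Implicit Defensive.
Import Order.TTheory GRing.Theory Num.Theory.
Local Open Scope ring_scope.

Section MRLCMM.
Variables (R : realType) (K : nat).

(* Nodes of the complete binary tree T* of depth K: node (k, j) is the j-th
   node (j < 2^k) at level k <= K; its interval is [j/2^k, (j+1)/2^k). *)
Definition node := {k : 'I_K.+1 & 'I_(2 ^ k)}.
Definition level (z : node) : nat := val (tag z).
Definition idx (z : node) : nat := val (tagged z).
Definition alpha (z : node) : R := (idx z)%:R / (2 ^ level z)%:R.
Definition beta (z : node) : R := (idx z).+1%:R / (2 ^ level z)%:R.
Definition inI (z : node) (x : R) : bool := (alpha z <= x) && (x < beta z).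

Definition inner := {z : node | (level z < K)%N}.

Definition omega (w : 'I_(2 ^ K)) : R := (val w)%:R / (2 ^ K)%:R.
Definition phi (z : node) (w : 'I_(2 ^ K)) : R :=
  if inI z (omega w) then 1 else 0.

Variable b : nat -> R.
Definition Bsum (l : nat) : R := \sum_(l.+1 <= k < K.+1) b k.

(* I_z strictly contained in I_y (half-open nonempty intervals) *)
Definition strict_sub (z y : node) : bool :=
  [&& alpha y <= alpha z, beta z <= beta y & (alpha z, beta z) != (alpha y, beta y)].

Definition Amat (z : node) (y : inner) : R :=
  if z == val y then Bsum (level z)
  else if strict_sub z (val y) then - b (level z) else 0.

Definition Ck (k : nat) (th : node -> R) : R :=
  b k * ln (\sum_(z : node | level z == k) expR (th z / b k)).
Definition Ctilde (th : node -> R) : R := \sum_(k < K.+1) Ck k th.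

Definition shiftA (th : node -> R) (eta : inner -> R) (z : node) : R :=
  th z + \sum_(y : inner) Amat z y * eta y.

Definition gradC (th : node -> R) (z : node) : R :=
  derive1 (fun t : R => Ctilde (fun z' => th z' + t * (z' == z)%:R)) 0.

End MRLCMM.

From HB Require Import structures.
From mathcomp Require Import all_boot all_order all_algebra.
From mathcomp Require Import all_classical all_reals all_analysis.
From mathcomp Require Import ring lra zify.
Import Order.TTheory GRing.Theory Num.Theory.
Local Open Scope ring_scope.

(* Let x = theta + A eta* and p = grad Ctilde(x).  The proof has an analytic
   and a combinatorial half.

   Ctilde is a sum over the levels k of b_k-scaled log-sum-exp
   functions, so its directional derivative along a is sum_z a_z q_z(x), where
   q(x) is the level-wise Gibbs (softmax) vector: p = q(x).  In particular
   p >= 0 and the price of the root, alone at level 0, is 1.  Since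
   eta |-> Ctilde(theta + A eta) is minimal at eta*, its derivative along each
   coordinate direction e_y vanishes, which is the statement (A^T p)_y = 0.

   A node is a pair (level, index); I_z is contained in I_y
   iff z lies in the subtree of y, and omega_w is in I_z iff the leaf w lies
   under z.  Row y of A^T p = 0 reads B_l p_y = sum over the strict
   descendants z of y of b_(level z) p_z, so by downward induction on the
   level every p_z is the total price of the leaves under z.  The leaf prices
   lambda_w are therefore nonnegative, sum to p_root = 1, and
   p_z = sum_w lambda_w phi_z(omega_w): p lies in the coherent price space. *)

Lemma is_derive_sum (R : realType) (V W : normedModType R) (I : finType)
    (P : pred I) (h : I -> V -> W) (dh : I -> W) (x v : V) :
  (forall i, is_derive x v (h i) (dh i)) ->
  is_derive x v (fun y => \sum_(i | P i) h i y) (\sum_(i | P i) dh i).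
Proof.
move=> hdh; have -> : (fun y => \sum_(i | P i) h i y) = \sum_(i | P i) h i.
  by apply: funext => y; rewrite fct_sumE.
elim/big_ind2 : _ => [|f df g dg Hf Hg|i _]; last exact: hdh.
- exact: is_derive_cst.
- exact: is_deriveD.
Qed.
Arguments is_derive_sum {R V W I} P {h dh x v}.

Lemma is_derive_logsumexp (R : realType) (I : finType) (P : pred I)
    (c : R) (x a : I -> R) (t : R) :
  c != 0 -> (exists i, P i) ->
  let S := \sum_(i | P i) expR ((x i + t * a i) / c) in
  is_derive t 1
    (fun s => c * ln (\sum_(i | P i) expR ((x i + s * a i) / c)))
    (\sum_(i | P i) a i * (expR ((x i + t * a i) / c) / S)).
Proof.
move=> c0 [i0 Pi0] S.
have S_gt0 : 0 < S.
  rewrite /S (bigD1 i0) //=; apply: ltr_pwDl; first exact: expR_gt0.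
  by apply: sumr_ge0 => i _; exact: expR_ge0.
have dexp i : is_derive t 1 (fun s => expR ((x i + s * a i) / c))
                 (expR ((x i + t * a i) / c) * (a i / c)).
  apply: (@is_derive1_comp _ expR (fun s => (x i + s * a i) / c)).
  have -> : (fun s => (x i + s * a i) / c) = cst (x i / c) + (a i / c) \*: id.
    apply: funext => s; rewrite !fctE.
    by change ((x i + s * a i) / c = x i / c + (a i / c) * s); ring.
  have := is_deriveD (is_derive_cst (x i / c) t 1)
    (is_deriveZ (a i / c) (@is_derive_id _ _ t 1)).
  by rewrite add0r /GRing.scale /= mulr1.
have dsum := is_derive_sum P dexp.
have dln := is_derive1_comp (is_derive1_ln S_gt0) dsum.
have := is_deriveZ c dln.
congr is_derive.
rewrite /GRing.scale /= mulrA mulr_sumr; apply: eq_bigr => i _.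
by field; rewrite c0 gt_eqF.
Qed.

Lemma ler_natfrac (R : realFieldType) (a c d e : nat) : (0 < c)%N -> (0 < e)%N ->
  (a%:R / c%:R <= d%:R / e%:R :> R) = (a * e <= d * c)%N.
Proof.
move=> c0 e0.
by rewrite ler_pdivrMr ?ltr0n // mulrAC ler_pdivlMr ?ltr0n // -!natrM ler_nat.
Qed.

Lemma ltr_natfrac (R : realFieldType) (a c d e : nat) : (0 < c)%N -> (0 < e)%N ->
  (a%:R / c%:R < d%:R / e%:R :> R) = (a * e < d * c)%N.
Proof.
move=> c0 e0.
by rewrite ltr_pdivrMr ?ltr0n // mulrAC ltr_pdivlMr ?ltr0n // -!natrM ltr_nat.
Qed.

Lemma eqr_natfrac (R : realFieldType) (a c d e : nat) : (0 < c)%N -> (0 < e)%N ->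
  (a%:R / c%:R == d%:R / e%:R :> R) = (a * e == d * c)%N.
Proof. by move=> c0 e0; rewrite eq_le !ler_natfrac // eqn_leq. Qed.

Local Open Scope nat_scope.

Lemma divn_eq_block (j e i : nat) : 0 < e -> (j %/ e == i) = (i * e <= j < i.+1 * e).
Proof. by move=> e0; rewrite eqn_leq leq_divRL // -ltnS ltn_divLR // andbC. Qed.

(* Dyadic containment: [j/2^k, (j+1)/2^k) lies in [i/2^l, (i+1)/2^l) iff the
   first interval is at least as deep and its index truncates to i. *)
Lemma dyadic_sub_nat (i l j k : nat) :
  (i * 2 ^ k <= j * 2 ^ l) && (j.+1 * 2 ^ l <= i.+1 * 2 ^ k)
  = (l <= k) && (j %/ 2 ^ (k - l) == i).
Proof.
have P_gt0 : 0 < 2 ^ l by rewrite expn_gt0.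
case: (leqP l k) => [lk | kl].
- have [d ->] : exists d, k = l + d by exists (k - l); rewrite subnKC.
  rewrite addKn expnD divn_eq_block ?expn_gt0 //; set P := 2 ^ l; set e := 2 ^ d.
  rewrite mulnCA [j * P]mulnC leq_pmul2l //.
  by rewrite mulnCA [j.+1 * P]mulnC leq_pmul2l.
- have [d ->] : exists d, l = k + d.+1 by exists (l - k).-1; lia.
  rewrite expnD; set P := 2 ^ k; set e := 2 ^ d.+1.
  have e_gt1 : 1 < e by rewrite /e expnS; have := expn_gt0 2 d; lia.
  apply/negbTE/negP => /andP[].
  rewrite [j * _]mulnCA [j.+1 * _]mulnCA [_ * P]mulnC [i.+1 * P]mulnC.
  rewrite !leq_pmul2l ?expn_gt0 // => lo hi; nia.
Qed.

Lemma dyadic_same_ends (i l j k : nat) :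
  (j * 2 ^ l == i * 2 ^ k) && (j.+1 * 2 ^ l == i.+1 * 2 ^ k) -> l = k.
Proof.
case/andP => /eqP lo; rewrite !mulSn lo eqn_add2r => /eqP.
by move/eqP; rewrite eqn_exp2l // => /eqP.
Qed.

Lemma dyadic_strict_sub_nat (i l j k : nat) :
  [&& i * 2 ^ k <= j * 2 ^ l, j.+1 * 2 ^ l <= i.+1 * 2 ^ k &
      ~~ ((j * 2 ^ l == i * 2 ^ k) && (j.+1 * 2 ^ l == i.+1 * 2 ^ k))]
  = (l < k) && (j %/ 2 ^ (k - l) == i).
Proof.
rewrite andbA dyadic_sub_nat ltn_neqAle -andbA andbC.
case: (eqVneq l k) => [<- | lk] /=.
  by rewrite leqnn andbT subnn expn0 divn1; case: eqP => // ->; rewrite !eqxx.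
have -> : ~~ ((j * 2 ^ l == i * 2 ^ k) && (j.+1 * 2 ^ l == i.+1 * 2 ^ k)).
  by apply/negP => /dyadic_same_ends l_eq_k; rewrite l_eq_k eqxx in lk.
by rewrite andbT andbC.
Qed.

Local Close Scope nat_scope.

Section TreeNodes.
Context {K : nat}.

Definition node_at {k j : nat} (Hk : (k < K.+1)%N) (Hj : (j < 2 ^ k)%N) : node K :=
  Tagged (fun k : 'I_K.+1 => 'I_(2 ^ k)) (@Ordinal (2 ^ (Ordinal Hk)) j Hj).

Lemma level_le (z : node K) : (level z <= K)%N.
Proof. by case: z => k j; rewrite /level /= -ltnS. Qed.

Lemma idx_lt (z : node K) : (idx z < 2 ^ level z)%N.
Proof. by case: z => k j; rewrite /idx /level /=. Qed.

Lemma node_eq (z z' : node K) : level z = level z' -> idx z = idx z' -> z = z'.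
Proof.
case: z => k j; case: z' => k' j'; rewrite /level /idx /= => /val_inj ek.
by subst k' => /val_inj ->.
Qed.

Lemma level_inhabited (k : nat) : (k <= K)%N -> exists z : node K, level z == k.
Proof.
rewrite -ltnS => Hk; have Hj : (0 < 2 ^ k)%N by rewrite expn_gt0.
by exists (node_at Hk Hj).
Qed.

Definition root : node K := @node_at 0 0 (ltn0Sn K) isT.

Lemma level0_root (z : node K) : (level z == 0%N) = (z == root).
Proof.
apply/eqP/eqP => [lz | -> //]; apply: node_eq => //=.
by have := idx_lt z; rewrite lz; case: (idx z).
Qed.

End TreeNodes.

Section DescendantsAndLeaves.
Context {K : nat}.

Definition leaf (w : 'I_(2 ^ K)) : node K :=
  Tagged (fun k : 'I_K.+1 => 'I_(2 ^ k)) (w : 'I_(2 ^ (@ord_max K))).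

Lemma leaf_level w : level (leaf w) = K. Proof. by []. Qed.
Lemma leaf_idx w : idx (leaf w) = w. Proof. by []. Qed.

Definition under (z y : node K) : bool :=
  (level y <= level z)%N && (idx z %/ 2 ^ (level z - level y) == idx y)%N.

Lemma under_trans_eq {x y z : node K} :
  under x y -> (level z <= level y)%N -> under y z = under x z.
Proof.
case/andP => lxy /eqP ixy lzy.
rewrite /under lzy (leq_trans lzy lxy) /= -ixy -divnMA -expnD.
by have -> : (level x - level y + (level y - level z) = level x - level z)%N by lia.
Qed.

Lemma leaf_ancestor (w : 'I_(2 ^ K)) (k : nat) : (k <= K)%N ->
  exists2 z : node K, level z = k & under (leaf w) z.
Proof.
rewrite -ltnS => Hk.
have Hj : (w %/ 2 ^ (K - k) < 2 ^ k)%N.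
  by rewrite ltn_divLR ?expn_gt0 // -expnD subnKC // -ltnS.
by exists (node_at Hk Hj) => //; rewrite /under leaf_level /= -ltnS Hk /=.
Qed.

Lemma under_root (w : 'I_(2 ^ K)) : under (leaf w) root.
Proof. by rewrite /under leaf_level /= subn0 leaf_idx divn_small. Qed.

Lemma sum_leaves_by_level {V : nmodType} (g : 'I_(2 ^ K) -> V) (y : node K) (k : nat) :
  (level y <= k)%N -> (k <= K)%N ->
  \sum_(z | (level z == k) && under z y) \sum_(w | under (leaf w) z) g w =
  \sum_(w | under (leaf w) y) g w.
Proof.
move=> lyk kK.
rewrite (exchange_big_dep (fun w => under (leaf w) y)) /=; last first.
  by move=> z w /andP[/eqP lz uzy] uwz; rewrite -(under_trans_eq uwz) // lz.
apply: eq_bigr => w uwy; have [zw lzw uwzw] := leaf_ancestor w _ kK.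
rewrite (big_pred1 zw) // => z /=; apply/idP/idP => [|/eqP ->].
  case/andP => /andP[/eqP lz _] /andP[_ /eqP iz].
  have /andP[_ /eqP izw] := uwzw.
  by apply/eqP/node_eq; rewrite ?lz ?lzw // -iz -izw lz lzw.
by rewrite lzw eqxx (under_trans_eq uwzw) ?lzw // uwy uwzw.
Qed.

End DescendantsAndLeaves.

Section GibbsPrices.
Variables (R : realType) (K : nat) (b : nat -> R).
Hypothesis b_gt0 : forall k : nat, (k <= K)%N -> 0 < b k.

Definition partition (x : node K -> R) (k : nat) : R :=
  \sum_(z : node K | level z == k) expR (x z / b k).

Definition gibbs (x : node K -> R) (z : node K) : R :=
  expR (x z / b (level z)) / partition x (level z).

Lemma gibbs_ge0 x z : 0 <= gibbs x z.
Proof.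
by apply: divr_ge0; [exact: expR_ge0 | apply: sumr_ge0 => i _; exact: expR_ge0].
Qed.

Lemma is_derive_Ctilde (x a : node K -> R) (t : R) :
  is_derive t 1 (fun s => Ctilde b (fun z => x z + s * a z))
    (\sum_z a z * gibbs (fun z => x z + t * a z) z).
Proof.
set y := fun z => x z + t * a z.
have dlevel (k : 'I_K.+1) : is_derive t 1 (fun s => Ck b k (fun z => x z + s * a z))
    (\sum_(z | level z == k) a z * gibbs y z).
  rewrite (eq_bigr (fun z => a z * (expR (y z / b k) / partition y k))); last first.
    by move=> z /eqP lz; rewrite /gibbs lz.
  have kK : (k <= K)%N by rewrite -ltnS.
  apply: is_derive_logsumexp; last exact: level_inhabited.
  by rewrite gt_eqF // b_gt0.
have := is_derive_sum (fun=> true) dlevel.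
congr is_derive.
by rewrite (partition_big (fun z : node K => tag z) xpredT).
Qed.

(* The root is alone at its level, so its Gibbs price is 1. *)
Lemma gibbs_root (x : node K -> R) : gibbs x root = 1.
Proof.
rewrite /gibbs /partition (big_pred1 root) ?divff ?gt_eqF ?expR_gt0 //.
exact: level0_root.
Qed.

Lemma shift_by0 (x a : node K -> R) : (fun z => x z + 0 * a z) = x.
Proof. by apply: funext => z; rewrite mul0r addr0. Qed.

Lemma gradC_gibbs (x : node K -> R) : gradC b x = gibbs x.
Proof.
apply: funext => z; rewrite /gradC derive1E.
have D := is_derive_Ctilde x (fun z' => (z' == z)%:R) 0.
rewrite (@derive_val _ _ _ _ _ _ _ D) shift_by0 (bigD1 z) //= eqxx mul1r big1 ?addr0 // => z' /negbTE ->.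
by rewrite mul0r.
Qed.

Lemma shiftA_coord (th : node K -> R) (eta : inner K -> R) (y : inner K) (t : R) :
  shiftA b th (fun y' => eta y' + t * (y' == y)%:R) =
  (fun z => shiftA b th eta z + t * Amat b z y).
Proof.
apply: funext => z; rewrite /shiftA -addrA; congr (_ + _).
under eq_bigr => y' _ do rewrite mulrDr.
rewrite big_split /=; congr (_ + _).
rewrite (bigD1 y) //= eqxx mulr1 big1 ?addr0 1?mulrC // => y' /negbTE->.
by rewrite !mulr0.
Qed.

Lemma gradC_orthogonal_A (th : node K -> R) (eta_star : inner K -> R) :
  (forall eta, Ctilde b (shiftA b th eta_star) <= Ctilde b (shiftA b th eta)) ->
  forall y : inner K, \sum_z Amat b z y * gradC b (shiftA b th eta_star) z = 0.
Proof.
move=> eta_min y; set x := shiftA b th eta_star.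
pose g s := Ctilde b (fun z => x z + s * Amat b z y).
have g_min : is_derive (0 : R) 1 g 0.
  apply: (@derive1_at_min _ g (-1) 1 0); first lra.
  - by move=> t _; apply: ex_derive; exact: is_derive_Ctilde.
  - by rewrite in_itv /= ltrN10 ltr01.
  - by move=> t _; rewrite /g shift_by0 -shiftA_coord; exact: eta_min.
have g_grad := is_derive_Ctilde x (fun z => Amat b z y) 0.
rewrite shift_by0 in g_grad; rewrite gradC_gibbs.
exact: (etrans (esym (@derive_val _ _ _ _ _ _ _ g_grad)) (@derive_val _ _ _ _ _ _ _ g_min)).
Qed.

End GibbsPrices.
Arguments gradC_gibbs {R K b} b_gt0 x.
Arguments gradC_orthogonal_A {R K b} b_gt0 {th eta_star}.

Section Payoffs.
Variables (R : realType) (K : nat).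

Lemma phi_under (z : node K) (w : 'I_(2 ^ K)) : phi R z w = (under (leaf w) z)%:R.
Proof.
rewrite /phi /inI /omega /alpha /beta ler_natfrac ?expn_gt0 // ltr_natfrac ?expn_gt0 //.
rewrite /under leaf_level level_le leaf_idx /= divn_eq_block ?expn_gt0 //.
move: (nat_of_ord w) => {}w; set d := (2 ^ (K - level z))%N.
have -> : (2 ^ K = d * 2 ^ level z)%N by rewrite -expnD subnK // level_le.
by rewrite !mulnA leq_pmul2r ?ltn_pmul2r ?expn_gt0 //; case: (_ && _).
Qed.

Lemma strict_sub_under (z y : node K) :
  strict_sub R z y = (level y < level z)%N && under z y.
Proof.
rewrite /strict_sub /alpha /beta !ler_natfrac ?expn_gt0 // xpair_eqE.
rewrite !eqr_natfrac ?expn_gt0 // dyadic_strict_sub_nat /under.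
by case: ltnP => // /ltnW ->.
Qed.

End Payoffs.

Section LeafConsistency.
Variables (R : realType) (K : nat) (b : nat -> R).
Hypothesis b_gt0 : forall k : nat, (k <= K)%N -> 0 < b k.

Definition leaf_mass (p : node K -> R) (z : node K) : R :=
  \sum_(w | under (leaf w) z) p (leaf w).

Lemma Bsum_gt0 (l : nat) : (l < K)%N -> 0 < Bsum K b l.
Proof.
move=> lK; rewrite /Bsum big_nat_recr //=; apply: ltr_wpDl; last exact: b_gt0.
rewrite big_nat_cond; apply: sumr_ge0 => k /andP[/andP[_ kK] _].
exact/ltW/b_gt0/ltnW.
Qed.

Lemma AT_row (p : node K -> R) (y : inner K) :
  \sum_z Amat b z y * p z = Bsum K b (level (val y)) * p (val y) -
    \sum_(z | (level (val y) < level z)%N && under z (val y)) b (level z) * p z.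
Proof.
rewrite (bigD1 (val y)) //= {1}/Amat eqxx; congr (_ + _).
rewrite -sumrN big_mkcond [RHS]big_mkcond /=; apply: eq_bigr => z _.
rewrite /Amat strict_sub_under; case: eqVneq => [-> | _] /=.
  by rewrite ltnn.
by case: (_ && _); rewrite ?mulNr ?mul0r.
Qed.

Lemma sum_descendant_mass (p : node K -> R) (y : node K) :
  \sum_(z | (level y < level z)%N && under z y) b (level z) * leaf_mass p z =
  Bsum K b (level y) * leaf_mass p y.
Proof.
rewrite (partition_big (fun z : node K => tag z) (fun k : 'I_K.+1 => level y < k)%N);
  last by move=> z /andP[].
rewrite /Bsum big_geq_mkord big_distrl /=; apply: eq_bigr => k lyk.
rewrite /leaf_mass.
rewrite -(sum_leaves_by_level (fun w => p (leaf w)) y k (ltnW lyk) (ltn_ord k)).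
rewrite big_distrr /=.
apply: eq_big => [z | z /andP[_ /eqP <-]] //.
have -> : (tag z == k) = (level z == k) by [].
by case: eqP => [-> | _]; rewrite ?lyk ?eqxx ?andbT ?andbF.
Qed.

Lemma leaf_mass_root (p : node K -> R) : leaf_mass p root = \sum_w p (leaf w).
Proof. by apply: eq_bigl => w; rewrite under_root. Qed.

Lemma leaf_mass_phi (p : node K -> R) (z : node K) :
  leaf_mass p z = \sum_w p (leaf w) * phi R z w.
Proof.
rewrite /leaf_mass big_mkcond /=; apply: eq_bigr => w _.
by rewrite phi_under; case: (under _ _); rewrite ?mulr1 ?mulr0.
Qed.

Lemma leaf_mass_leaf (p : node K -> R) (z : node K) : level z = K -> p z = leaf_mass p z.
Proof.
move=> lzK; have Hw : (idx z < 2 ^ K)%N by have := idx_lt z; rewrite lzK.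
rewrite /leaf_mass (big_pred1 (Ordinal Hw)).
  by congr p; apply: node_eq; rewrite ?leaf_level ?leaf_idx.
by move=> w /=; rewrite /under leaf_level lzK leqnn subnn expn0 divn1 leaf_idx.
Qed.

(* If A^T p = 0, every price is the leaf mass under its node; this is proved
   by downward induction on the level, using AT_row and sum_descendant_mass. *)
Lemma price_leaf_mass (p : node K -> R) :
  (forall y : inner K, \sum_z Amat b z y * p z = 0) -> forall z, p z = leaf_mass p z.
Proof.
move=> ATp0; suff IH n z : (K - level z <= n)%N -> p z = leaf_mass p z.
  by move=> z; exact: (IH _ z (leqnn _)).
elim: n z => [|n IHn] z hz; first by apply: leaf_mass_leaf; have := level_le z; lia.
have [lzK | lzK] := eqVneq (level z) K; first exact: leaf_mass_leaf.
have lz_lt : (level z < K)%N by rewrite ltn_neqAle lzK level_le.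
have /eqP := ATp0 (exist _ z lz_lt); rewrite AT_row /= subr_eq0 => /eqP balance.
have Bz : Bsum K b (level z) != 0 by rewrite gt_eqF // Bsum_gt0.
apply: (mulfI Bz); rewrite balance -sum_descendant_mass.
apply: eq_bigr => z' /andP[lt _]; congr (_ * _); apply: IHn.
by have := level_le z'; lia.
Qed.

End LeafConsistency.
Arguments price_leaf_mass {R K b} b_gt0 {p}.

Theorem theorem3 (R : realType) (K : nat) (b : nat -> R) :
  (1 <= K)%N ->
  (forall k : nat, (k <= K)%N -> 0 < b k) ->
  forall (th : node K -> R) (eta_star : inner K -> R),
  (forall eta : inner K -> R,
     Ctilde b (shiftA b th eta_star) <= Ctilde b (shiftA b th eta)) ->
  let p := gradC b (shiftA b th eta_star) in
  (forall y : inner K, \sum_(z : node K) Amat b z y * p z = 0) /\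
  exists lam : 'I_(2 ^ K) -> R,
    (forall w, 0 <= lam w) /\ \sum_w lam w = 1 /\
    forall z : node K, p z = \sum_w lam w * phi R z w.
Proof.
move=> _ b_gt0 th eta_star eta_min p.
have ATp0 := gradC_orthogonal_A b_gt0 eta_min.
have p_mass := price_leaf_mass b_gt0 ATp0.
split=> //; exists (fun w => p (leaf w)); split; [|split].
- by move=> w; rewrite /p (gradC_gibbs b_gt0); exact: gibbs_ge0.
- by rewrite -leaf_mass_root -p_mass /p (gradC_gibbs b_gt0) gibbs_root.
- by move=> z; rewrite /p p_mass leaf_mass_phi.
Qed.
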